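(* Let $m,n$ be natural numbers and let $F_{ij}=\int_{-1}^{1}P_{i-1}(\eta)\,\eta^{j-1}\,d\eta$. For each natural $k$ let $\mathbf f_{k,\bullet}=(F_{k1},F_{k2},\dots,F_{k,n+1})^T$, and let $\mathbf f'=(F_{1,m+1},F_{1,m+2},\dots,F_{1,m+n+1})^T$. Then $\mathbf f'$ is a linear combination of the vectors $\mathbf f_{\delta,\bullet},\mathbf f_{\delta+2,\bullet},\dots,\mathbf f_{m+1,\bullet}$, where $\delta=1$ if $m$ is even and $\delta=2$ if $m$ is odd.
   Context: $P_k$ denotes the Legendre polynomial of degree $k$; $F=(F_{ij})$ is the matrix of moments of the Legendre polynomials. *)

From Stdlib Require Import Reals Lra Lia.
From Coquelicot Require Import Coquelicot.
Open Scope R_scope.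

(* Legendre polynomials via Bonnet's recurrence:
   P_0 = 1, P_1 = x, (k+1) P_{k+1} = (2k+1) x P_k - k P_{k-1}.
   legendre_pair k x = (P_k x, P_{k+1} x). *)
Fixpoint legendre_pair (k : nat) (x : R) : R * R :=
  match k with
  | O => (1, x)
  | S k' =>
      let (p, q) := legendre_pair k' x in
      (q, ((2 * INR k' + 3) * x * q - (INR k' + 1) * p) / (INR k' + 2))
  end.

Definition legendre (k : nat) (x : R) : R := fst (legendre_pair k x).

Definition Fmom (i j : nat) : R :=
  RInt (fun eta => legendre (i - 1) eta * eta ^ (j - 1)) (-1) 1.

Definition delta (m : nat) : nat := if Nat.even m then 1%nat else 2%nat.

(* Bonnet's recurrence writes [x P_k] as a combination of [P_(k+1)] and [P_(k-1)],
   so multiplying by [x] maps the span of [P_k], [k <= m], [k = m mod 2], into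
   the corresponding span for [m + 1]; by induction [x^m] lies in the span of
   [P_(m mod 2)], [P_(m mod 2 + 2)], ..., [P_m].  Multiplying such an identity by
   [x^(j-1)] and integrating over [-1, 1] expresses [F_(1, m+j)] through the
   [F_(k, j)] with the same coefficients for every [j]; since
   [delta m = 1 + m mod 2], these are exactly the rows of the statement. *)

From Stdlib Require Import Reals Lra Lia.
From Coquelicot Require Import Coquelicot.
Open Scope R_scope.

Lemma legendre_S k x : legendre (S k) x = snd (legendre_pair k x).
Proof. unfold legendre; simpl; destruct (legendre_pair k x); reflexivity. Qed.

Lemma legendre_SS k x :
  legendre (S (S k)) x =
  ((2 * INR k + 3) * x * legendre (S k) x - (INR k + 1) * legendre k x)
  / (INR k + 2).
Proof.
  rewrite !legendre_S; unfold legendre; simpl.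
  destruct (legendre_pair k x); reflexivity.
Qed.

Lemma legendre_continuous k x : continuous (legendre k) x.
Proof.
  enough (H : continuous (legendre k) x /\ continuous (legendre (S k)) x)
    by apply H.
  induction k as [|k [IHk IHSk]].
  - split.
    + apply continuous_const.
    + apply (continuous_ext (fun y => y)); [reflexivity | apply continuous_id].
  - split; [exact IHSk |].
    apply (continuous_ext (fun y =>
             ((2 * INR k + 3) * y * legendre (S k) y
              + - (INR k + 1) * legendre k y) * / (INR k + 2))).
    { intros y; simpl; rewrite legendre_SS; unfold Rdiv; ring. }
    apply (continuous_mult (K := R_AbsRing)); [| apply continuous_const].
    apply (continuous_plus (V := R_NormedModule));
      apply (continuous_mult (K := R_AbsRing)); try assumption;
      try apply continuous_const.
    apply (continuous_mult (K := R_AbsRing));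
      [apply continuous_const | apply continuous_id].
Qed.

Lemma pow_continuous p x : continuous (fun y => y ^ p) x.
Proof.
  induction p as [|p IHp]; [apply continuous_const |].
  apply (continuous_mult (K := R_AbsRing)); [apply continuous_id | exact IHp].
Qed.

Definition parity_span (m : nat) (f : R -> R) : Prop :=
  exists c : nat -> R, forall x,
    f x = sum_f_R0 (fun t => c t * legendre (m mod 2 + 2 * t) x) (m / 2).

Section ParitySpan.

Variable m : nat.

Lemma parity_span_ext f g :
  (forall x, f x = g x) -> parity_span m f -> parity_span m g.
Proof. intros Hfg [c Hc]; exists c; intros x; rewrite <- Hfg; apply Hc. Qed.

Lemma parity_span_add f g :
  parity_span m f -> parity_span m g -> parity_span m (fun x => f x + g x).
Proof.
  intros [c Hc] [d Hd]; exists (fun t => c t + d t); intros x.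
  rewrite Hc, Hd, <- plus_sum; apply sum_eq; intros; ring.
Qed.

Lemma parity_span_scal k f :
  parity_span m f -> parity_span m (fun x => k * f x).
Proof.
  intros [c Hc]; exists (fun t => k * c t); intros x.
  rewrite Hc, scal_sum; apply sum_eq; intros; ring.
Qed.

Lemma parity_span_sum N (g : nat -> R -> R) :
  (forall t, (t <= N)%nat -> parity_span m (g t)) ->
  parity_span m (fun x => sum_f_R0 (fun t => g t x) N).
Proof.
  induction N as [|N IHN]; intros Hg; [apply Hg; lia |].
  apply parity_span_add; [apply IHN; intros t Ht |]; apply Hg; lia.
Qed.

Lemma parity_span_legendre : parity_span m (legendre m).
Proof.
  pose proof (Nat.div_mod_eq m 2) as Hm.
  exists (fun t => if Nat.eqb t (m / 2) then 1 else 0); intros x.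
  destruct (m / 2)%nat as [|h] eqn:Eh.
  - cbn [sum_f_R0 Nat.eqb]; replace (m mod 2 + 2 * 0)%nat with m by lia; ring.
  - rewrite tech5, Nat.eqb_refl, sum_eq_R0.
    + replace (m mod 2 + 2 * S h)%nat with m by lia; ring.
    + intros t Ht; destruct (Nat.eqb_spec t (S h)); [lia | ring].
Qed.

Lemma parity_span_add2 f : parity_span m f -> parity_span (m + 2) f.
Proof.
  intros [c Hc].
  exists (fun t => if Nat.leb t (m / 2) then c t else 0); intros x.
  replace ((m + 2) mod 2)%nat with (m mod 2)
    by (replace (m + 2)%nat with (m + 1 * 2)%nat by lia;
        rewrite Nat.Div0.mod_add; reflexivity).
  replace ((m + 2) / 2)%nat with (S (m / 2))
    by (replace (m + 2)%nat with (m + 1 * 2)%nat by lia;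
        rewrite Nat.div_add; lia).
  rewrite tech5, Hc.
  replace (Nat.leb (S (m / 2)) (m / 2)) with false
    by (symmetry; apply Nat.leb_gt; lia).
  rewrite Rmult_0_l, Rplus_0_r; apply sum_eq; intros t Ht.
  replace (Nat.leb t (m / 2)) with true by (symmetry; apply Nat.leb_le; lia).
  reflexivity.
Qed.

End ParitySpan.

Lemma parity_span_add_even m d f :
  parity_span m f -> parity_span (m + 2 * d) f.
Proof.
  induction d as [|d IHd]; intros Hf.
  - rewrite Nat.add_0_r; exact Hf.
  - replace (m + 2 * S d)%nat with (m + 2 * d + 2)%nat by lia.
    apply parity_span_add2, IHd, Hf.
Qed.

Lemma parity_span_mul_id_legendre k :
  parity_span (S k) (fun x => x * legendre k x).
Proof.
  destruct k as [|k].
  - apply (parity_span_ext _ (legendre 1)); [| apply parity_span_legendre].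
    intros x; unfold legendre; simpl; ring.
  - apply (parity_span_ext _ (fun x =>
             (INR k + 2) / (2 * INR k + 3) * legendre (S (S k)) x
             + (INR k + 1) / (2 * INR k + 3) * legendre k x)).
    + intros x; rewrite legendre_SS; pose proof (pos_INR k); field; lra.
    + apply parity_span_add; apply parity_span_scal;
        [apply parity_span_legendre |].
      replace (S (S k)) with (k + 2)%nat by lia.
      apply parity_span_add2, parity_span_legendre.
Qed.

Lemma parity_span_mul_id m f :
  parity_span m f -> parity_span (S m) (fun x => x * f x).
Proof.
  intros [c Hc].
  apply (parity_span_ext _ (fun x => sum_f_R0
           (fun t => c t * (x * legendre (m mod 2 + 2 * t) x)) (m / 2))).
  { intros x; rewrite Hc, scal_sum; apply sum_eq; intros; ring. }
  apply parity_span_sum; intros t Ht; apply parity_span_scal.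
  pose proof (Nat.div_mod_eq m 2).
  replace (S m) with (S (m mod 2 + 2 * t) + 2 * (m / 2 - t))%nat by lia.
  apply parity_span_add_even, parity_span_mul_id_legendre.
Qed.

Lemma parity_span_pow m : parity_span m (fun x => x ^ m).
Proof.
  induction m as [|m IHm].
  - apply (parity_span_ext _ (legendre 0)); [reflexivity |].
    apply parity_span_legendre.
  - exact (parity_span_mul_id _ _ IHm).
Qed.

Lemma ex_RInt_legendre_pow k p a b :
  ex_RInt (fun y => legendre k y * y ^ p) a b.
Proof.
  apply (ex_RInt_continuous (V := R_CompleteNormedModule)); intros z _.
  apply (continuous_mult (K := R_AbsRing));
    [apply legendre_continuous | apply pow_continuous].
Qed.

Lemma RInt_sum_f_R0 (c : nat -> R) (g : nat -> R -> R) a b N :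
  (forall t, ex_RInt (g t) a b) ->
  RInt (fun y => sum_f_R0 (fun t => c t * g t y) N) a b =
  sum_f_R0 (fun t => c t * RInt (g t) a b) N.
Proof.
  intros Hg.
  assert (Hc : forall t, ex_RInt (fun y => c t * g t y) a b)
    by (intros t; apply (ex_RInt_scal (V := R_NormedModule)), Hg).
  induction N as [|N IHN]; simpl.
  - apply (RInt_scal (V := R_CompleteNormedModule)), Hg.
  - rewrite <- IHN, <- (RInt_scal (V := R_CompleteNormedModule)) by apply Hg.
    apply (RInt_plus (V := R_CompleteNormedModule)); [| apply Hc].
    clear IHN; induction N as [|N IHN]; simpl; [apply Hc |].
    apply (ex_RInt_plus (V := R_NormedModule)); [exact IHN | apply Hc].
Qed.

Lemma delta_mod2 m : delta m = S (m mod 2).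
Proof.
  unfold delta; destruct (Nat.even m) eqn:E.
  - apply Nat.even_spec in E; destruct E as [k ->].
    rewrite Nat.mul_comm, Nat.Div0.mod_mul; reflexivity.
  - assert (Ho : Nat.odd m = true) by (unfold Nat.odd; rewrite E; reflexivity).
    apply Nat.odd_spec in Ho; destruct Ho as [k ->].
    replace (2 * k + 1)%nat with (1 + k * 2)%nat by lia.
    rewrite Nat.Div0.mod_add; reflexivity.
Qed.

Theorem lemma3 (m n : nat) :
  exists c : nat -> R,
    forall j : nat, (1 <= j <= n + 1)%nat ->
      Fmom 1 (m + j) =
      sum_f_R0 (fun t => c t * Fmom (delta m + 2 * t) j)
               ((m + 1 - delta m) / 2).
Proof.
  destruct (parity_span_pow m) as [c Hc]; exists c; intros j Hj.
  pose proof (Nat.div_mod_eq m 2) as Hm.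
  replace ((m + 1 - delta m) / 2)%nat with (m / 2)%nat.
  2:{ rewrite delta_mod2.
      replace (m + 1 - S (m mod 2))%nat with (m / 2 * 2)%nat by lia.
      rewrite Nat.div_mul; lia. }
  unfold Fmom; rewrite (RInt_ext _ (fun y => sum_f_R0 (fun t =>
      c t * (legendre (m mod 2 + 2 * t) y * y ^ (j - 1))) (m / 2))).
  2:{ intros y _; replace (m + j - 1)%nat with (m + (j - 1))%nat by lia.
      change (legendre (1 - 1) y) with 1.
      rewrite Rmult_1_l, pow_add, Hc, Rmult_comm, scal_sum.
      apply sum_eq; intros; ring. }
  rewrite RInt_sum_f_R0 by (intros; apply ex_RInt_legendre_pow).
  apply sum_eq; intros t _; rewrite delta_mod2.
  replace (S (m mod 2) + 2 * t - 1)%nat with (m mod 2 + 2 * t)%nat by lia.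
  reflexivity.
Qed.
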